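(* Let $K$ be a division ring, $G$ a group, and suppose $a,b\in K[G]$, each of rank $\ge2$, satisfy $ab=1$. Then there is a subgroup $H$ of $G$ such that, letting $c=E^G_H(a)$ and $d=E^G_H(b)$: (i) $cd=1$; (ii) the ranks of $c$ and $d$ are both $\ge2$; (iii) the support of $c$ generates $H$; (iv) the support of $d$ generates $H$. Furthermore, if also $dc=1$, then $a=c$ and $b=d$.
   Context: $K[G]$ is the group ring; the support of an element is the set of group elements with nonzero coefficient and its rank is the cardinality of the support. For a subgroup $H\le G$, $E^G_H:K[G]\to K[H]$ is the $K$-linear map with $E^G_H(g)=g$ for $g\in H$ and $E^G_H(g)=0$ for $g\in G\setminus H$. *)

(* group rings K[G] over an arbitrary (possibly infinite) group G,
   elements are finitely supported functions G -> K (finmap's fsfun). *)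
From HB Require Import structures.
From mathcomp Require Import all_boot all_order all_algebra all_fingroup.
From mathcomp Require Import finmap.

Set Implicit Arguments.
Unset Strict Implicit.
Unset Printing Implicit Defensive.

Import GRing.Theory.
Local Open Scope fset_scope.
Local Open Scope ring_scope.

Section GroupRing.
Variables (K : unitRingType) (G : groupType).

Definition grpring := {fsfun G -> K with 0}.

Definition gsupp (a : grpring) : {fset G} := finsupp a.
Definition grank (a : grpring) : nat := #|` finsupp a|.

Definition gone : grpring := [fsfun g in [fset 1%g] => (1 : K) | 0].

Definition gmul (a b : grpring) : grpring :=
  [fsfun g in [fset (x * y)%g | x in finsupp a, y in finsupp b] =>
     \sum_(h <- finsupp a) a h * b (h^-1 * g)%g | 0].

(* E^G_H : K[G] -> K[H], with K[H] viewed inside K[G] *)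
Definition gproj (H : {pred G}) (a : grpring) : grpring :=
  [fsfun g in finsupp a => (if g \in H then a g else 0) | 0].

Definition generates (S : {fset G}) (H : {pred G}) : Prop :=
  [/\ group_closed H, {subset S <= H} &
      forall H' : {pred G}, group_closed H' -> {subset S <= H'} -> {subset H <= H'}].

End GroupRing.

From HB Require Import structures.
From mathcomp Require Import all_boot all_order all_algebra all_fingroup.
From mathcomp Require Import finmap boolp.

(* Start from H = <supp a> and, as long as one of the supports of c = E_H(a),
   d = E_H(b) generates a proper subgroup L of H, replace H by L.  Since E_L is
   K[L]-linear on both sides, fixes 1 and fixes the factor whose support
   generates L, the identity cd = 1 survives; by uniqueness of inverses so does
   "dc = 1 implies c = a and d = b".  Every H met is generated by a subset of
   supp a \cup supp b, so the number of elements of that finite set lying in H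
   strictly decreases, and the process stops at an H generated by both
   supports.  Finally, if c or d had rank 1 it would be an invertible monomial,
   whence dc = 1, c = a and d = b, contradicting the rank hypotheses. *)

Set Implicit Arguments.
Unset Strict Implicit.
Unset Printing Implicit Defensive.
Import GRing.Theory.
Local Open Scope fset_scope.
Local Open Scope ring_scope.

Section ClosedGroup.
Variables (G : groupType) (L : {pred G}).
Hypothesis L_group : group_closed L.

Lemma group_closed_memV g : ((g^-1)%g \in L) = (g \in L).
Proof.
by apply/idP/idP => /(group_closedV L_group) //; rewrite invgK.
Qed.

Lemma group_closed_mulVl h g : h \in L -> ((h^-1 * g)%g \in L) = (g \in L).
Proof.
move=> hL; apply/idP/idP => [|gL].
  by rewrite -{2}(mulKVg h g); apply: (group_closedM L_group).
by apply: (group_closedM L_group); rewrite ?group_closed_memV.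
Qed.

Lemma group_closed_mulVr h g : g \in L -> ((h^-1 * g)%g \in L) = (h \in L).
Proof.
move=> gL; rewrite -(group_closed_memV (h^-1 * g)) invgM invgK.
exact: group_closed_mulVl.
Qed.

End ClosedGroup.

Section GeneratedSubgroup.
Variable G : groupType.
Implicit Types (S T U : {fset G}) (H : {pred G}).

Definition gengroup S : {pred G} :=
  [pred g | `[< forall H, group_closed H -> {subset S <= H} -> g \in H >]].

Lemma mem_gengroup S g :
  g \in gengroup S <-> forall H, group_closed H -> {subset S <= H} -> g \in H.
Proof. by rewrite inE; split => /asboolP. Qed.

Lemma gengroup_closed S : group_closed (gengroup S).
Proof.
split; first by apply/mem_gengroup => H [].
move=> u v /mem_gengroup uS /mem_gengroup vS; apply/mem_gengroup => H H_group SH.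
by case: (H_group) => _; apply; [apply: uS | apply: vS].
Qed.

Lemma sub_gengroup S : {subset S <= gengroup S}.
Proof. by move=> x xS; apply/mem_gengroup => H _; apply. Qed.

Lemma gengroup_min S H : group_closed H -> {subset S <= H} -> {subset gengroup S <= H}.
Proof. by move=> H_group SH x /mem_gengroup; apply. Qed.

Lemma generates_gengroup S H : H =i gengroup S -> generates S H.
Proof.
move=> eqH; split.
- split => [|u v]; rewrite !eqH; first by case: (gengroup_closed S).
  by case: (gengroup_closed S) => _; apply.
- by move=> x /sub_gengroup; rewrite eqH.
- by move=> H' H'_group SH' x; rewrite eqH; apply: gengroup_min.
Qed.

Lemma card_gengroup_lt U S T : S `<=` U -> {subset T <= gengroup S} ->
  ~ gengroup S =i gengroup T ->
  (#|` [fset x in U | x \in gengroup T]| < #|` [fset x in U | x \in gengroup S]|)%N.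
Proof.
move=> SU TS neqST; have TS' := gengroup_min (gengroup_closed S) TS.
have sub : [fset x in U | x \in gengroup T] `<=` [fset x in U | x \in gengroup S].
  by apply/fsubsetP => x; rewrite !inE => /andP[-> /TS'].
apply: fproper_ltn_card; rewrite fproperEneq sub andbT; apply/eqP => eqUTS.
apply: neqST => x; apply/idP/idP => [|/TS' //].
apply: gengroup_min x; first exact: gengroup_closed.
move=> s sS; have : s \in [fset x in U | x \in gengroup S].
  by rewrite !inE; apply/andP; split; [apply: (fsubsetP SU) | apply: sub_gengroup].
by rewrite -eqUTS !inE => /andP[].
Qed.

End GeneratedSubgroup.

Section GroupRing.
Variables (K : unitRingType) (G : groupType).
Implicit Types (a b c : grpring K G) (g h : G) (X : {fset G}).

Lemma goneE g : gone K G g = if g == 1%g then 1 else 0.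
Proof. by rewrite fsfunE in_fset1. Qed.

Lemma finsupp_gone : finsupp (gone K G) `<=` [fset 1%g].
Proof. exact: finsupp_sub. Qed.

Lemma finsupp_gmul a b :
  finsupp (gmul a b) `<=` [fset (x * y)%g | x in finsupp a, y in finsupp b].
Proof. exact: finsupp_sub. Qed.

Lemma gmulE a b X g : finsupp a `<=` X ->
  gmul a b g = \sum_(h <- X) a h * b (h^-1 * g)%g.
Proof.
move=> aX; rewrite fsfunE; case: ifPn => [_|gNab].
  by apply: big_fset_incl => // h _ /fsfun_dflt ->; rewrite mul0r.
apply/esym/big1_fset => h _ _.
have [ha|/fsfun_dflt ->] := boolP (h \in finsupp a); last by rewrite mul0r.
have [hg|/fsfun_dflt ->] := boolP ((h^-1 * g)%g \in finsupp b); last by rewrite mulr0.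
by move: gNab; rewrite -{1}(mulKVg h g) in_imfset2.
Qed.

Lemma gmul1l : left_id (gone K G) (@gmul K G).
Proof.
move=> a; apply/fsfunP => g; rewrite (gmulE _ _ finsupp_gone) big_seq_fset1.
by rewrite goneE eqxx mul1r invg1 mul1g.
Qed.

Lemma gmul1r : right_id (gone K G) (@gmul K G).
Proof.
move=> a; apply/fsfunP => g.
rewrite (gmulE _ _ (fsubsetUr [fset g] _)) (big_fsetD1 g) ?fsetU11 //=.
rewrite goneE mulVg eqxx mulr1 big1_fset ?addr0 // => h; rewrite !inE => /andP[hg _] _.
by rewrite goneE -(inj_eq (mulgI h)) mulKVg mulg1 eq_sym (negPf hg) mulr0.
Qed.

Lemma gmulA : associative (@gmul K G).
Proof.
move=> a b c; apply/fsfunP => g.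
rewrite (gmulE _ _ (finsupp_gmul a b)) (gmulE _ _ (fsubset_refl (finsupp a))).
under [RHS]eq_bigr do rewrite (gmulE _ _ (fsubset_refl (finsupp a))) mulr_suml.
rewrite [RHS]exchange_big /=; apply: eq_big_seq => h ha.
rewrite (gmulE _ _ (fsubset_refl (finsupp b))) mulr_sumr.
have hbX : [fset (h * y)%g | y in finsupp b] `<=`
           [fset (x * y)%g | x in finsupp a, y in finsupp b].
  by apply/fsubsetP => _ /imfsetP[y /= yb ->]; rewrite in_imfset2.
rewrite -(big_fset_incl _ hbX); last first.
  move=> x _ xNhb.
  have [hx|/fsfun_dflt ->] := boolP ((h^-1 * x)%g \in finsupp b); last by rewrite mulr0 mul0r.
  by move: xNhb; rewrite -{1}(mulKVg h x) in_imfset.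
rewrite big_imfset /=; last by move=> x y _ _; apply: mulgI.
apply: eq_bigr => y _; by rewrite mulKg invgM mulgA mulrA.
Qed.

Lemma gmul_inv_uniq a b c : gmul b a = gone K G -> gmul a c = gone K G -> b = c.
Proof. by move=> ba ac; rewrite -[b]gmul1r -ac gmulA ba gmul1l. Qed.

Lemma gprojE (L : {pred G}) a g : gproj L a g = if g \in L then a g else 0.
Proof. by rewrite fsfunE; case: finsuppP; case: ifP. Qed.

Lemma finsupp_gproj (L : {pred G}) a : finsupp (gproj L a) `<=` finsupp a.
Proof. exact: finsupp_sub. Qed.

Lemma finsupp_gproj_in (L : {pred G}) a : {subset finsupp (gproj L a) <= L}.
Proof. by move=> g; rewrite mem_finsupp gprojE; case: ifP; rewrite ?eqxx. Qed.

Lemma gproj_id (L : {pred G}) a : {subset finsupp a <= L} -> gproj L a = a.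
Proof.
move=> aL; apply/fsfunP => g; rewrite gprojE; case: ifPn => // gNL.
by rewrite fsfun_dflt //; apply: contra gNL => /aL.
Qed.

Lemma gproj_comp (L H : {pred G}) a : {subset L <= H} -> gproj L (gproj H a) = gproj L a.
Proof. by move=> LH; apply/fsfunP => g; rewrite !gprojE; case: ifP => // /LH ->. Qed.

Section SubgroupProjection.
Variable L : {pred G}.
Hypothesis L_group : group_closed L.

Lemma gproj_gone : gproj L (gone K G) = gone K G.
Proof.
apply: gproj_id => g /(fsubsetP finsupp_gone); rewrite in_fset1 => /eqP ->.
by case: L_group.
Qed.

Lemma gprojMl a b : {subset finsupp a <= L} -> gproj L (gmul a b) = gmul a (gproj L b).
Proof.
move=> aL; apply/fsfunP => g; rewrite gprojE !(gmulE _ _ (fsubset_refl (finsupp a))).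
case: ifPn => gL.
  by apply: eq_big_seq => h /aL hL; rewrite gprojE (group_closed_mulVl L_group) ?gL.
apply/esym/big1_seq => h /andP[_ /aL hL].
by rewrite gprojE (group_closed_mulVl L_group) // (negPf gL) mulr0.
Qed.

Lemma gprojMr a b : {subset finsupp b <= L} -> gproj L (gmul a b) = gmul (gproj L a) b.
Proof.
move=> bL; apply/fsfunP => g.
rewrite gprojE (gmulE _ _ (fsubset_refl (finsupp a))) (gmulE _ _ (finsupp_gproj L a)).
case: ifPn => gL.
  apply: eq_bigr => h _; rewrite gprojE; case: ifPn => // hNL.
  rewrite [b _]fsfun_dflt ?mulr0 ?mul0r //; apply: contra hNL => /bL.
  by rewrite (group_closed_mulVr L_group).
apply/esym/big1 => h _; rewrite gprojE; case: ifPn => hL; last by rewrite mul0r.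
rewrite [b _]fsfun_dflt ?mulr0 //; apply: contra gL => /bL.
by rewrite (group_closed_mulVl L_group).
Qed.

End SubgroupProjection.

Definition gmono g (k : K) : grpring K G := [fsfun x in [fset g] => k | 0].

Lemma gmonoE g k x : gmono g k x = if x == g then k else 0.
Proof. by rewrite fsfunE in_fset1. Qed.

Lemma gmul_mono g k h l : gmul (gmono g k) (gmono h l) = gmono (g * h)%g (k * l).
Proof.
apply/fsfunP => x; rewrite (gmulE _ _ (finsupp_sub _ _ _)) big_seq_fset1 !gmonoE eqxx.
by rewrite -(inj_eq (mulgI g)) mulKVg; case: eqP; rewrite ?mulr0.
Qed.

Lemma gmono_inv g k : k \is a GRing.unit ->
  gmul (gmono g k) (gmono g^-1 k^-1) = gone K G /\
  gmul (gmono g^-1 k^-1) (gmono g k) = gone K G.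
Proof. by move=> ku; rewrite !gmul_mono mulgV mulVg mulrV ?mulVr. Qed.

Lemma finsupp1_gmono a g : finsupp a = [fset g] -> a = gmono g (a g).
Proof.
move=> ag; apply/fsfunP => x; rewrite gmonoE; case: eqP => [->|/eqP xg] //.
by rewrite fsfun_dflt // ag in_fset1.
Qed.

Lemma gmul_eq1_grank_gt0 a b : gmul a b = gone K G ->
  (0 < grank a)%N /\ (0 < grank b)%N.
Proof.
move=> ab; have := congr1 (fun f : grpring K G => f 1%g) ab.
rewrite goneE eqxx (gmulE _ _ (fsubset_refl _)) => ab1.
split; rewrite lt0n; apply/negP => /eqP/cardfs0_eq supp0; move: ab1.
  by rewrite supp0 big_seq_fset0 => /eqP; rewrite eq_sym oner_eq0.
rewrite big1_fset => [/eqP|h _ _]; first by rewrite eq_sym oner_eq0.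
by rewrite [b _]fsfun_dflt ?supp0 ?mulr0.
Qed.

Section DivisionRing.
Hypothesis K_division : forall k : K, k != 0 -> k \is a GRing.unit.

Lemma gmul_eq1_commute a b : gmul a b = gone K G ->
  (grank a == 1)%N || (grank b == 1)%N -> gmul b a = gone K G.
Proof.
move=> ab /orP[] /cardfs1P[g supp_g]; have := fset11 g;
  rewrite -supp_g mem_finsupp => /K_division/(gmono_inv g)[rinv linv];
  rewrite -(finsupp1_gmono supp_g) in rinv linv.
- by rewrite -(gmul_inv_uniq linv ab).
- by rewrite (gmul_inv_uniq ab rinv).
Qed.

Lemma gmul_eq1_grank_ge2 a b : gmul a b = gone K G ->
  (gmul b a = gone K G -> (2 <= grank a)%N /\ (2 <= grank b)%N) ->
  (2 <= grank a)%N /\ (2 <= grank b)%N.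
Proof.
move=> ab ba_ge2; have [a_gt0 b_gt0] := gmul_eq1_grank_gt0 ab.
have [/(gmul_eq1_commute ab)/ba_ge2 //|] :=
  boolP ((grank a == 1)%N || (grank b == 1)%N).
rewrite negb_or => /andP[a_neq1 b_neq1].
by split; rewrite ltn_neqAle eq_sym ?a_neq1 ?b_neq1.
Qed.

End DivisionRing.
End GroupRing.

Section Reduction.
Variables (K : unitRingType) (G : groupType) (a b : grpring K G).
Hypothesis ab1 : gmul a b = gone K G.
Local Notation U := (finsupp a `|` finsupp b).
Local Notation c S := (gproj (gengroup S) a).
Local Notation d S := (gproj (gengroup S) b).

Definition admissible (S : {fset G}) :=
  [/\ S `<=` U, gmul (c S) (d S) = gone K G &
      gmul (d S) (c S) = gone K G -> a = c S /\ b = d S].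

Lemma admissible_finsupp : admissible (finsupp a).
Proof.
have ca : c (finsupp a) = a by apply: gproj_id; apply: sub_gengroup.
split; first exact: fsubsetUl.
  rewrite ca -(gprojMl (gengroup_closed _)) ?ab1 ?gproj_gone //.
    exact: gengroup_closed.
  exact: sub_gengroup.
by rewrite ca => da; rewrite (gmul_inv_uniq da ab1).
Qed.

Lemma admissible_finsupp_l S : admissible S -> admissible (finsupp (c S)).
Proof.
case=> SU cd cd_inv; set T := finsupp (c S).
have TS := gengroup_min (gengroup_closed S) (@finsupp_gproj_in _ _ (gengroup S) a).
have cT : c T = c S by rewrite -(gproj_comp a TS) gproj_id //; apply: sub_gengroup.
split; first exact: fsubset_trans (finsupp_gproj _ _) (fsubsetUl _ _).
  rewrite cT -(gproj_comp b TS) -(gprojMl (gengroup_closed T)) ?cd ?gproj_gone //.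
    exact: gengroup_closed.
  exact: sub_gengroup.
rewrite cT => dc; have dT : d T = d S := gmul_inv_uniq dc cd.
by rewrite dT; apply: cd_inv; rewrite -dT.
Qed.

Lemma admissible_finsupp_r S : admissible S -> admissible (finsupp (d S)).
Proof.
case=> SU cd cd_inv; set T := finsupp (d S).
have TS := gengroup_min (gengroup_closed S) (@finsupp_gproj_in _ _ (gengroup S) b).
have dT : d T = d S by rewrite -(gproj_comp b TS) gproj_id //; apply: sub_gengroup.
split; first exact: fsubset_trans (finsupp_gproj _ _) (fsubsetUr _ _).
  rewrite dT -(gproj_comp a TS) -(gprojMr (gengroup_closed T)) ?cd ?gproj_gone //.
    exact: gengroup_closed.
  exact: sub_gengroup.
rewrite dT => dc; have cT : c S = c T := gmul_inv_uniq cd dc.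
by rewrite -cT; apply: cd_inv; rewrite cT.
Qed.

Lemma admissible_fixpoint : exists2 S, admissible S &
  gengroup S =i gengroup (finsupp (c S)) /\ gengroup S =i gengroup (finsupp (d S)).
Proof.
pose size S := #|` [fset x in U | x \in gengroup S]|.
move: (finsupp a) admissible_finsupp => S adm; have [n] := ubnP (size S).
elim: n S adm => // n IH S adm; rewrite ltnS => size_le; have [SU _ _] := adm.
have [eqc|neqc] := pselect (gengroup S =i gengroup (finsupp (c S))); last first.
  apply: IH (admissible_finsupp_l adm) _; apply: leq_trans size_le.
  by apply: card_gengroup_lt SU _ neqc; apply: finsupp_gproj_in.
have [eqd|neqd] := pselect (gengroup S =i gengroup (finsupp (d S))); first by exists S.
apply: IH (admissible_finsupp_r adm) _; apply: leq_trans size_le.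
by apply: card_gengroup_lt SU _ neqd; apply: finsupp_gproj_in.
Qed.

End Reduction.

Theorem proposition2p3 (K : unitRingType) (G : groupType)
  (hK : forall x : K, x != 0 -> x \is a GRing.unit)
  (a b : grpring K G) :
  (2 <= grank a)%N -> (2 <= grank b)%N -> gmul a b = gone K G ->
  exists H : {pred G},
    group_closed H /\
    [/\ gmul (gproj H a) (gproj H b) = gone K G,
        (2 <= grank (gproj H a))%N /\ (2 <= grank (gproj H b))%N,
        generates (gsupp (gproj H a)) H,
        generates (gsupp (gproj H b)) H &
        (gmul (gproj H b) (gproj H a) = gone K G ->
           a = gproj H a /\ b = gproj H b)].
Proof.
move=> ra rb ab1.
have [S [_ cd cd_inv] [eqc eqd]] := admissible_fixpoint ab1.
exists (gengroup S); split; first exact: gengroup_closed.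
split => //; try exact: generates_gengroup.
apply: (gmul_eq1_grank_ge2 hK cd) => dc.
by have [<- <-] := cd_inv dc.
Qed.
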